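(* Let $H=K_2\vee\overline{K_2}$ (i.e. $K_4$ minus an edge), and let $v$ be a vertex of degree $2$ in $H$. Then the line graph $L(H)$ has no $f_{3,v}$-kernel-perfect orientation. Equivalently, $H$ is not $f_{3,v}$-edge-orientable.
   Context: $G_1\vee G_2$ denotes the join: the disjoint union of $G_1$ and $G_2$ plus all edges between them. $\overline{K_2}$ is the edgeless graph on $2$ vertices. An orientation of a graph is any digraph obtained by replacing each edge $uv$ with the arc $(u,v)$, with the arc $(v,u)$, or with both arcs. A kernel of a digraph $D$ is an independent set $S$ such that every vertex of $D-S$ has an out-neighbor in $S$. $D$ is kernel-perfect if every induced subdigraph of $D$ has a kernel. For $f:V\to\mathbb{N}$, an orientation $D$ is $f$-kernel-perfect if it is kernel-perfect and $f(x)\ge 1+d^+_D(x)$ for every vertex $x$. For $v\in V(H)$, $f_{3,v}:E(H)\to\mathbb{N}$ is defined by $f_{3,v}(e)=d_H(v)$ if $e$ is incident to $v$, and $f_{3,v}(e)=3$ otherwise. *)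

(* Simple graphs are symmetric irreflexive boolean relations
   on a finType; digraphs are arbitrary relations on a finType. *)
From HB Require Import structures.
From mathcomp Require Import all_boot.
Set Implicit Arguments. Unset Strict Implicit. Unset Printing Implicit Defensive.

Definition simple_graph (T : finType) (G : rel T) : Prop :=
  irreflexive G /\ symmetric G.

Definition deg (T : finType) (G : rel T) (x : T) : nat := #|[set y | G x y]|.

Definition join (T1 T2 : finType) (G1 : rel T1) (G2 : rel T2) : rel (T1 + T2)%type :=
  fun u w => match u, w with
             | inl x, inl y => G1 x y
             | inr x, inr y => G2 x y
             | _, _ => true
             end.

Definition Kn (n : nat) : rel 'I_n := fun x y => x != y.
Definition coKn (n : nat) : rel 'I_n := fun _ _ => false.

Definition Hgraph : rel ('I_2 + 'I_2)%type := join (@Kn 2) (@coKn 2).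

Definition is_edge (T : finType) (G : rel T) (e : {set T}) : bool :=
  [exists x, exists y, G x y && (e == [set x; y])].
Definition edge (T : finType) (G : rel T) := {e : {set T} | is_edge G e}.

Definition line_graph (T : finType) (G : rel T) : rel (edge G) :=
  fun e e' => (e != e') && (val e :&: val e' != set0).

Definition f3 (T : finType) (G : rel T) (v : T) : edge G -> nat :=
  fun e => if v \in val e then deg G v else 3.

Definition orientation (T : finType) (G : rel T) (D : rel T) : Prop :=
  (forall x y, D x y -> G x y) /\ (forall x y, G x y -> D x y || D y x).

Definition is_kernel_in (T : finType) (D : rel T) (A S : {set T}) : Prop :=
  S \subset A /\
  (forall x y, x \in S -> y \in S -> ~~ D x y) /\
  (forall x, x \in A :\: S -> exists2 y, y \in S & D x y).

Definition kernel_perfect (T : finType) (D : rel T) : Prop :=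
  forall A : {set T}, exists S : {set T}, is_kernel_in D A S.

Definition outdeg (T : finType) (D : rel T) (x : T) : nat := #|[set y | D x y]|.

Definition f_kernel_perfect (T : finType) (D : rel T) (f : T -> nat) : Prop :=
  kernel_perfect D /\ forall x, 1 + outdeg D x <= f x.

Arguments edge {T} G.
Arguments line_graph {T} G.
Arguments f3 {T} G v.

From mathcomp Require Import all_boot.
Set Implicit Arguments. Unset Strict Implicit. Unset Printing Implicit Defensive.

(* In a kernel-perfect digraph every triangle has a sink, namely its kernel.
   Write A = ab, P = av, Q = bv, R = aw, S = bw for the edges of K_4 - e, v of
   degree 2; in L(H) the bound f_{3,v} allows P and Q one out-neighbour and
   A, R, S two.  An arc P -> Q is impossible: it is the only arc out of P, so
   A -> P and R -> P; the triangle APQ then forces A -> Q, which saturates A,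
   so R -> A and S -> A; the triangle AQS forces S -> Q, which saturates S, so
   R -> S and R has three out-neighbours.  By the symmetry a <-> b there is no
   arc Q -> P either, although P and Q are adjacent in L(H). *)

Lemma neq_eqF (T : eqType) (x y : T) :
  x != y -> ((x == y) = false) * ((y == x) = false).
Proof. by move=> nxy; rewrite [y == x]eq_sym (negbTE nxy). Qed.

Section KernelPerfectDigraphs.
Variables (T : finType) (D : rel T).

Lemma outdeg_uniq_leq x s : uniq s -> all (D x) s -> size s <= outdeg D x.
Proof.
move=> uniq_s /allP Dxs; rewrite -(card_uniqP uniq_s).
by apply/subset_leq_card/subsetP => y /Dxs Dxy; rewrite inE.
Qed.

Lemma outdeg_full_arc x s z :
  uniq (z :: s) -> all (D x) s -> outdeg D x <= size s -> ~~ D x z.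
Proof.
move=> uniq_zs Dxs out_x; apply/negP => Dxz.
have := outdeg_uniq_leq (x := x) uniq_zs; rewrite /= Dxz Dxs => /(_ isT).
by rewrite ltnNge out_x.
Qed.

Hypothesis kpD : kernel_perfect D.

Lemma kernel_perfect_clique_sink (A : {set T}) :
  A != set0 -> {in A &, forall x y, x != y -> D x y || D y x} ->
  exists2 u, u \in A & {in A, forall t, t != u -> D t u}.
Proof.
move=> /set0Pn[x0 Ax0] adjA; have [S [sSA [indS domS]]] := kpD A.
have SA := subsetP sSA.
have S_single : {in S &, forall x y, x = y}.
  move=> x y xS yS; apply/eqP; apply: contraT => nxy.
  have := adjA x y (SA x xS) (SA y yS) nxy.
  by rewrite (negbTE (indS x y xS yS)) (negbTE (indS y x yS xS)).
have [u uS] : exists u, u \in S.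
  have [x0S | x0S] := boolP (x0 \in S); first by exists x0.
  have x0AS : x0 \in A :\: S by rewrite inE x0S.
  by have [u uS _] := domS x0 x0AS; exists u.
exists u => [|t At ntu]; first exact: SA.
have tS : t \notin S by apply: contra ntu => tS; rewrite (S_single t u tS uS).
have tAS : t \in A :\: S by rewrite inE tS At.
have [y yS Dty] := domS t tAS.
by rewrite -(S_single y u yS uS).
Qed.

Lemma kernel_perfect_triangle_sink x y z :
  uniq [:: x; y; z] -> D x y || D y x -> D x z || D z x -> D y z || D z y ->
  [\/ D y x && D z x, D x y && D z y | D x z && D y z].
Proof.
rewrite /= !inE !negb_or andbT => /andP[/andP[nxy nxz] nyz] xy xz yz.
have [||u] := @kernel_perfect_clique_sink [set x; y; z].
- by apply/set0Pn; exists x; rewrite !inE eqxx.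
- move=> s t; rewrite !inE -!orbA => /or3P[]/eqP-> /or3P[]/eqP->;
  rewrite ?eqxx // => _; by rewrite ?xy ?xz ?yz // orbC ?xy ?xz ?yz.
rewrite !inE -orbA => /or3P[]/eqP-> sink;
  [apply: Or31 | apply: Or32 | apply: Or33];
  by rewrite !sink ?inE ?eqxx ?orbT // eq_sym.
Qed.

End KernelPerfectDigraphs.

Section ForbiddenConfiguration.
Variables (T : finType) (D : rel T) (a p q r s : T).
Hypotheses (kpD : kernel_perfect D) (distinct : uniq [:: a; p; q; r; s]).
Hypotheses (ap : D a p || D p a) (aq : D a q || D q a) (ar : D a r || D r a).
Hypotheses (as_ : D a s || D s a) (pr : D p r || D r p) (qs : D q s || D s q).
Hypothesis (rs : D r s || D s r).
Hypotheses (out_p : outdeg D p <= 1) (out_q : outdeg D q <= 1).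
Hypotheses (out_a : outdeg D a <= 2) (out_r : outdeg D r <= 2).
Hypothesis (out_s : outdeg D s <= 2).

Lemma forbidden_configuration_no_arc : ~~ D p q.
Proof.
move: distinct; rewrite /= !inE !negb_or !andbT.
move=> /and4P[/and4P[nap naq nar nas] /and3P[npq npr nps] /andP[nqr nqs] nrs].
have neqE := (neq_eqF nap, neq_eqF naq, neq_eqF nar, neq_eqF nas, neq_eqF npq,
  neq_eqF npr, neq_eqF nps, neq_eqF nqr, neq_eqF nqs, neq_eqF nrs).
apply/negP => Dpq.
have [nDpa nDpr] : ~~ D p a /\ ~~ D p r.
  by split; apply: (outdeg_full_arc (s := [:: q])) out_p;
    rewrite /= ?inE ?neqE ?Dpq.
have Dap : D a p by move: ap; rewrite (negbTE nDpa) orbF.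
have Drp : D r p by move: pr; rewrite (negbTE nDpr).
have Daq : D a q.
  apply: contraT => nDaq; have Dqa : D q a by move: aq; rewrite (negbTE nDaq).
  have Dqp : D q p.
    have := kernel_perfect_triangle_sink kpD (x := a) (y := p) (z := q).
    rewrite /= !inE ?neqE Dap Dpq Dqa orbT => /(_ isT isT isT isT).
    by rewrite (negbTE nDpa) (negbTE nDaq) => -[].
  have : ~~ D q p.
    by apply: (outdeg_full_arc (s := [:: a])) out_q; rewrite /= ?inE ?neqE ?Dqa.
  by rewrite Dqp.
have [nDar nDas] : ~~ D a r /\ ~~ D a s.
  by split; apply: (outdeg_full_arc (s := [:: p; q])) out_a;
    rewrite /= ?inE ?neqE ?Dap ?Daq.
have Dra : D r a by move: ar; rewrite (negbTE nDar).
have Dsa : D s a by move: as_; rewrite (negbTE nDas).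
have Dsq : D s q.
  apply: contraT => nDsq.
  have Dqs : D q s by move: qs; rewrite (negbTE nDsq) orbF.
  have nDqa : ~~ D q a.
    by apply: (outdeg_full_arc (s := [:: s])) out_q; rewrite /= ?inE ?neqE ?Dqs.
  have := kernel_perfect_triangle_sink kpD (x := a) (y := q) (z := s).
  rewrite /= !inE ?neqE Daq Dqs Dsa !orbT => /(_ isT isT isT isT).
  by rewrite (negbTE nDqa) (negbTE nDsq) (negbTE nDas) !andbF => -[].
have nDsr : ~~ D s r.
  by apply: (outdeg_full_arc (s := [:: a; q])) out_s;
    rewrite /= ?inE ?neqE ?Dsa ?Dsq.
have Drs : D r s by move: rs; rewrite (negbTE nDsr) orbF.
have : ~~ D r s.
  by apply: (outdeg_full_arc (s := [:: p; a])) out_r;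
    rewrite /= ?inE ?neqE ?Drp ?Dra.
by rewrite Drs.
Qed.

End ForbiddenConfiguration.

Section GraphEdges.
Variables (T : finType) (G : rel T).

Lemma is_edge_pair x y : G x y -> is_edge G [set x; y].
Proof.
by move=> Gxy; apply/existsP; exists x; apply/existsP; exists y; rewrite Gxy eqxx.
Qed.

Definition edge_of x y (Gxy : G x y) : edge G :=
  exist _ [set x; y] (is_edge_pair Gxy).

Lemma edge_neq (e e' : edge G) z : z \in val e -> z \notin val e' -> e != e'.
Proof. by move=> ze; apply: contraNneq => <-. Qed.

Lemma line_graph_share (e e' : edge G) z z' :
  z \in val e -> z \in val e' -> z' \in val e -> z' \notin val e' ->
  line_graph G e e'.
Proof.
move=> ze ze' z'e z'e'; rewrite /line_graph (edge_neq z'e z'e') /=.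
by apply/set0Pn; exists z; rewrite inE ze ze'.
Qed.

Lemma orientation_line_graph_share (D : rel (edge G)) (e e' : edge G) z z' :
  orientation (line_graph G) D ->
  z \in val e -> z \in val e' -> z' \in val e -> z' \notin val e' ->
  D e e' || D e' e.
Proof.
move=> [_ orient] ze ze' z'e z'e'.
exact/orient/(line_graph_share ze ze' z'e z'e').
Qed.

Lemma f3_outdeg_incident (D : rel (edge G)) v (e : edge G) :
  f_kernel_perfect D (f3 G v) -> v \in val e -> outdeg D e < deg G v.
Proof. by move=> [_ out_f] ve; have := out_f e; rewrite /f3 ve. Qed.

Lemma f3_outdeg_nonincident (D : rel (edge G)) v (e : edge G) :
  f_kernel_perfect D (f3 G v) -> v \notin val e -> outdeg D e <= 2.
Proof. by move=> [_ out_f] nve; have := out_f e; rewrite /f3 (negbTE nve). Qed.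

End GraphEdges.

Theorem K4_minus_edge_no_f3_kernel_perfect_orientation (T : finType) (G : rel T)
    (a b v w : T) (Gab : G a b) (Gav : G a v) (Gbv : G b v) (Gaw : G a w)
    (Gbw : G b w) :
  uniq [:: a; b; v; w] -> deg G v <= 2 ->
  ~ exists D, orientation (line_graph G) D /\ f_kernel_perfect D (f3 G v).
Proof.
rewrite /= !inE !negb_or !andbT.
move=> /and3P[/and3P[nab nav naw] /andP[nbv nbw] nvw] degv [D [orD fkpD]].
have neqE := (neq_eqF nab, neq_eqF nav, neq_eqF naw, neq_eqF nbv,
  neq_eqF nbw, neq_eqF nvw).
pose eA := edge_of Gab; pose eP := edge_of Gav; pose eQ := edge_of Gbv.
pose eR := edge_of Gaw; pose eS := edge_of Gbw.
have adj := @orientation_line_graph_share _ _ D _ _ _ _ orD.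
have ap : D eA eP || D eP eA by apply: (adj _ _ a b); rewrite !inE ?eqxx ?neqE.
have aq : D eA eQ || D eQ eA by apply: (adj _ _ b a); rewrite !inE ?eqxx ?neqE.
have ar : D eA eR || D eR eA by apply: (adj _ _ a b); rewrite !inE ?eqxx ?neqE.
have as_ : D eA eS || D eS eA by apply: (adj _ _ b a); rewrite !inE ?eqxx ?neqE.
have pq : D eP eQ || D eQ eP by apply: (adj _ _ v a); rewrite !inE ?eqxx ?neqE.
have pr : D eP eR || D eR eP by apply: (adj _ _ a v); rewrite !inE ?eqxx ?neqE.
have qs : D eQ eS || D eS eQ by apply: (adj _ _ b v); rewrite !inE ?eqxx ?neqE.
have sr : D eS eR || D eR eS by apply: (adj _ _ w b); rewrite !inE ?eqxx ?neqE.
have rs : D eR eS || D eS eR by rewrite orbC.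
(* The five edges are told apart by which of a, b, v, w they contain. *)
pose ends (e : edge G) := [:: a \in val e; b \in val e; v \in val e; w \in val e].
have uniq_PQ : uniq [:: eA; eP; eQ; eR; eS].
  by apply: (@map_uniq _ _ ends); rewrite /ends /= !inE ?eqxx ?neqE.
have uniq_QP : uniq [:: eA; eQ; eP; eS; eR].
  by apply: (@map_uniq _ _ ends); rewrite /ends /= !inE ?eqxx ?neqE.
have out_v (e : edge G) : v \in val e -> outdeg D e <= 1.
  by move=> ve; apply: leq_trans (f3_outdeg_incident fkpD ve) degv.
have out_p : outdeg D eP <= 1 by apply: out_v; rewrite !inE eqxx orbT.
have out_q : outdeg D eQ <= 1 by apply: out_v; rewrite !inE eqxx orbT.
have [out_a out_r out_s] :
    [/\ outdeg D eA <= 2, outdeg D eR <= 2 & outdeg D eS <= 2].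
  by split; apply: (f3_outdeg_nonincident fkpD); rewrite !inE ?neqE.
have [kpD _] := fkpD.
have := forbidden_configuration_no_arc kpD uniq_PQ ap aq ar as_ pr qs rs
  out_p out_q out_a out_r out_s.
have := forbidden_configuration_no_arc kpD uniq_QP aq ap as_ ar qs pr sr
  out_q out_p out_a out_s out_r.
by case/orP: pq => ->.
Qed.

Theorem mainTheorem19 :
  forall v : ('I_2 + 'I_2)%type, deg Hgraph v = 2 ->
  ~ (exists D : rel (edge Hgraph),
       orientation (line_graph Hgraph) D /\
       f_kernel_perfect D (f3 Hgraph v)).
Proof.
pose other (k : 'I_2) : 'I_2 := if k == ord0 then ord_max else ord0.
have neq_other k : k != other k by rewrite /other; case: ifP => [/eqP-> | /negbT].
case=> [k | i] degv.
  suff : 3 <= deg Hgraph (inl k) by rewrite degv.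
  apply: (outdeg_uniq_leq
    (s := [:: inl (other k); inr ord0; inr ord_max])) => //=.
  by rewrite andbT; apply: neq_other.
apply: (@K4_minus_edge_no_f3_kernel_perfect_orientation _ _
  (inl ord0) (inl ord_max) _ (inr (other i))); rewrite ?degv //= inE andbT.
exact: neq_other.
Qed.
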